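(* Let $T$ be a CPTP map on $\mathfrak{H}(\mathcal{H})$ with a fixed operator-sum representation $\{M_k\}$, and let $\mathcal{H}_S\neq\mathcal{H}$ be an invariant subspace. Then $\mathcal{H}_S$ is GAS if and only if the Dissipation-Induced Decomposition (DID) construction started from $\mathcal{H}_S$ terminates successfully.
   Context: $\mathcal{H}$ is a finite-dimensional complex Hilbert space, $\mathfrak{H}(\mathcal{H})$ the real space of Hermitian operators, $\mathfrak{D}(\mathcal{H})$ the density operators. $T$ is CPTP: $T(\rho)=\sum_k M_k\rho M_k^\dagger$, $\sum_kM_k^\dagger M_k=I$. A subspace $\mathcal{H}_S$ (projection $\Pi_S$) is invariant if $\rho\ge0$, $\mathrm{supp}(\rho)\subseteq\mathcal{H}_S$ implies $\mathrm{supp}(T(\rho))\subseteq\mathcal{H}_S$, with $\mathrm{supp}(X)=(\ker X)^\perp$. An invariant $\mathcal{H}_S$ is GAS if $\lim_{n\to\infty}\|T^n(\rho)-\Pi_ST^n(\rho)\Pi_S\|=0$ for all $\rho\in\mathfrak{D}(\mathcal{H})$. DID construction: set $\mathcal{H}_{S_1}=\mathcal{H}_S$, $\mathcal{H}_{R_1}=\mathcal{H}_S^\perp$. At step $i$, with $\mathcal{H}=\mathcal{H}_{S_i}\oplus\mathcal{H}_{R_i}$ orthogonal, let $M_{k,P'_i}=\Pi_{S_i}M_k|_{\mathcal{H}_{R_i}}:\mathcal{H}_{R_i}\to\mathcal{H}_{S_i}$ and $\mathcal{H}_{R_{i+1}}=\bigcap_k\ker(M_{k,P'_i})\subseteq\mathcal{H}_{R_i}$.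 (1) If $\mathcal{H}_{R_{i+1}}=\mathcal{H}_{R_i}$ (all $M_{k,P'_i}=0$), set $\mathcal{H}_{T_i}=\mathcal{H}_{R_i}$ and stop: the construction terminates unsuccessfully. (2) If $\mathcal{H}_{R_{i+1}}=\{0\}$, set $\mathcal{H}_{T_i}=\mathcal{H}_{R_i}$ and stop: the construction terminates successfully. (3) Otherwise let $\mathcal{H}_{T_i}$ be the orthogonal complement of $\mathcal{H}_{R_{i+1}}$ in $\mathcal{H}_{R_i}$, set $\mathcal{H}_{S_{i+1}}=\mathcal{H}_{S_i}\oplus\mathcal{H}_{T_i}$, and iterate. *)

From HB Require Import structures.
From mathcomp Require Import all_boot all_order all_algebra.
Set Implicit Arguments. Unset Strict Implicit. Unset Printing Implicit Defensive.
Import Order.TTheory GRing.Theory Num.Theory.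
Local Open Scope ring_scope.

(* A SUBSPACE of H is represented (mxalgebra
   style) by a matrix U whose row space is { v^T | v in the subspace }. *)

Section QDefs.
Variable C : numClosedFieldType.
Variable n : nat.

Definition adj (p q : nat) (A : 'M[C]_(p, q)) : 'M[C]_(q, p) := map_mx Num.conj (A^T).

Definition orth (p : nat) (U : 'M[C]_(p, n)) : 'M[C]_n := kermx (adj U).

(* kernel and support of an operator: ker X = {v | X v = 0},
   supp X = (ker X)^perp *)
Definition kerop (X : 'M[C]_n) : 'M[C]_n := kermx (X^T).
Definition supp (X : 'M[C]_n) : 'M[C]_n := orth (kerop X).

(* range of an operator (column space), as a subspace *)
Definition rangeop (X : 'M[C]_n) : 'M[C]_n := X^T.

Definition psd (X : 'M[C]_n) : Prop :=
  adj X = X /\ forall v : 'cV[C]_n, 0 <= (adj v *m X *m v) 0 0.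
Definition density (X : 'M[C]_n) : Prop := psd X /\ \tr X = 1.
Definition orth_proj (P : 'M[C]_n) : Prop := adj P = P /\ P *m P = P.

Definition trace_preserving (m : nat) (M : 'I_m -> 'M[C]_n) : Prop :=
  \sum_(k < m) adj (M k) *m M k = 1%:M.
Definition kraus (m : nat) (M : 'I_m -> 'M[C]_n) (rho : 'M[C]_n) : 'M[C]_n :=
  \sum_(k < m) M k *m rho *m adj (M k).

Definition invariant_subspace (m : nat) (M : 'I_m -> 'M[C]_n) (P : 'M[C]_n) : Prop :=
  forall rho, psd rho -> (supp rho <= rangeop P)%MS ->
    (supp (kraus M rho) <= rangeop P)%MS.

(* GAS: || T^t(rho) - P T^t(rho) P || -> 0 for every density rho; the norm
   is the entrywise max-norm (all norms are equivalent in finite dimension) *)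
Definition GAS (m : nat) (M : 'I_m -> 'M[C]_n) (P : 'M[C]_n) : Prop :=
  forall rho, density rho ->
    forall eps : C, 0 < eps -> exists N : nat, forall t : nat, (N <= t)%N ->
      forall i j : 'I_n,
        `| (iter t (kraus M) rho - P *m iter t (kraus M) rho *m P) i j | < eps.

Definition DID_R (S : 'M[C]_n) : 'M[C]_n := orth S.
(* R_{i+1} = intersection over k of ker(Pi_{S_i} M_k |_{R_i})
           = { v in R_i | forall k, M_k v in S_i^perp } *)
Definition DID_Rnext (m : nat) (M : 'I_m -> 'M[C]_n) (S : 'M[C]_n) : 'M[C]_n :=
  (DID_R S :&: \bigcap_(k < m) kermx ((M k)^T *m adj S))%MS.
Definition DID_T (m : nat) (M : 'I_m -> 'M[C]_n) (S : 'M[C]_n) : 'M[C]_n :=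
  (DID_R S :&: orth (DID_Rnext M S))%MS.
Definition DID_step (m : nat) (M : 'I_m -> 'M[C]_n) (S : 'M[C]_n) : 'M[C]_n :=
  (S + DID_T M S)%MS.
(* S_{i+1} (0-indexed: DID_S M S0 0 = S_1 = S0) *)
Definition DID_S (m : nat) (M : 'I_m -> 'M[C]_n) (S0 : 'M[C]_n) (i : nat) :=
  iter i (DID_step M) S0.

Definition DID_fail (m : nat) (M : 'I_m -> 'M[C]_n) (S : 'M[C]_n) : bool :=
  (DID_Rnext M S == DID_R S)%MS.
Definition DID_succ (m : nat) (M : 'I_m -> 'M[C]_n) (S : 'M[C]_n) : bool :=
  ~~ DID_fail M S && (\rank (DID_Rnext M S) == 0)%N.
Definition DID_cont (m : nat) (M : 'I_m -> 'M[C]_n) (S : 'M[C]_n) : bool :=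
  ~~ DID_fail M S && (\rank (DID_Rnext M S) != 0)%N.

Definition DID_terminates_successfully (m : nat) (M : 'I_m -> 'M[C]_n)
    (S0 : 'M[C]_n) : Prop :=
  exists i : nat, (forall j, (j < i)%N -> DID_cont M (DID_S M S0 j)) /\
                  DID_succ M (DID_S M S0 i).

End QDefs.

(* Let Q = 1 - P and let T^* be the Heisenberg dual of the channel T.
   Invariance of H_S gives Q M_k P = 0, so gap t := Q - T^*t(Q) is positive,
   nondecreasing in t, and <u, gap 1 u> = sum_k |P M_k u|^2 for u in H_S^perp.
   If gap t vanishes on a vector u of H_S^perp, then by induction on t every
   image of u under products of Kraus operators stays in H_S^perp, which puts
   u in the DID remainder R_{t+1}.
   - If the construction succeeds at step i, then R_{i+1} = 0, so gap (i+1)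
     dominates delta Q on H_S^perp for some delta > 0; the weight tr (Q rho)
     outside H_S then shrinks by the factor 1 - delta every i+1 steps, and the
     off-diagonal blocks of T^t(rho), bounded by sqrt (tr (Q T^t(rho))), vanish.
   - If it fails at step i, the nonzero remainder R_i is invariant under every
     M_k and orthogonal to H_S, so a pure state in R_i never reaches H_S.
   The rank of R_i drops while the construction continues, so it always
   stops, and GAS rules out the failing case. *)

From HB Require Import structures.
From mathcomp Require Import all_boot all_order all_algebra.
From mathcomp Require Import ring.
Import Order.TTheory GRing.Theory Num.Theory.
Local Open Scope ring_scope.
Set Implicit Arguments. Unset Strict Implicit. Unset Printing Implicit Defensive.

Section Adjoint.
Variable C : numClosedFieldType.

Lemma adj_entry p q (A : 'M[C]_(p, q)) i j : adj A j i = (A i j)^*.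
Proof. by rewrite !mxE. Qed.
Lemma adjM p q r (A : 'M[C]_(p, q)) (B : 'M[C]_(q, r)) : adj (A *m B) = adj B *m adj A.
Proof. by rewrite /adj trmx_mul map_mxM. Qed.
Lemma adjK p q (A : 'M[C]_(p, q)) : adj (adj A) = A.
Proof. exact: trmxCK. Qed.
Lemma adjD p q (A B : 'M[C]_(p, q)) : adj (A + B) = adj A + adj B.
Proof. by apply/matrixP=> i j; rewrite !mxE rmorphD. Qed.
Lemma adjB p q (A B : 'M[C]_(p, q)) : adj (A - B) = adj A - adj B.
Proof. by apply/matrixP=> i j; rewrite !mxE rmorphB. Qed.
Lemma adj0 p q : adj (0 : 'M[C]_(p, q)) = 0.
Proof. by apply/matrixP=> i j; rewrite !mxE rmorph0. Qed.
Lemma adjZ p q a (A : 'M[C]_(p, q)) : adj (a *: A) = a^* *: adj A.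
Proof. by apply/matrixP=> i j; rewrite !mxE rmorphM. Qed.
Lemma adj1 p : adj (1%:M : 'M[C]_p) = 1%:M.
Proof. by rewrite /adj trmx1 map_mx1. Qed.
Lemma adjT p q (A : 'M[C]_(p, q)) : adj (A^T) = (adj A)^T.
Proof. by apply/matrixP => i j; rewrite !mxE. Qed.

Lemma orthE n p (U : 'M[C]_(p, n)) :
  orth U = orthomx Num.conj (mx_of_hermitian (hermitian1mx n)) U.
Proof. by rewrite /orth /orthomx /= mul1mx. Qed.
Lemma orthK n p (U : 'M[C]_(p, n)) : (orth (orth U) :=: U)%MS.
Proof. by rewrite !orthE; apply: ortho_id. Qed.
Lemma rank_orth n p (U : 'M[C]_(p, n)) : \rank (orth U) = (n - \rank U)%N.
Proof. by rewrite orthE; apply: rank_ortho. Qed.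
Lemma sub_orth n p q (U : 'M[C]_(p, n)) (V : 'M[C]_(q, n)) :
  (V <= orth U)%MS = (V *m adj U == 0).
Proof. exact/sub_kermxP/eqP. Qed.
Lemma orthS n p q (U : 'M[C]_(p, n)) (V : 'M[C]_(q, n)) :
  (orth U <= orth V)%MS = (V <= U)%MS.
Proof. by rewrite !orthE; apply: submx_ortho. Qed.
Lemma orth_sym n p q (U : 'M[C]_(p, n)) (V : 'M[C]_(q, n)) :
  (V <= orth U)%MS = (U <= orth V)%MS.
Proof.
by rewrite !sub_orth; apply/eqP/eqP=> h; rewrite -[LHS]adjK adjM adjK h adj0.
Qed.
Lemma orth_eqmx n p q (U : 'M[C]_(p, n)) (V : 'M[C]_(q, n)) :
  (U :=: V)%MS -> (orth U :=: orth V)%MS.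
Proof. by move=> eUV; apply/eqmxP/andP; split; rewrite orthS eUV. Qed.
Lemma orth_adds n p q (U : 'M[C]_(p, n)) (V : 'M[C]_(q, n)) :
  (orth (U + V)%MS :=: orth U :&: orth V)%MS.
Proof.
apply/eqmxP/andP; split; first by rewrite sub_capmx !orthS addsmxSl addsmxSr.
by rewrite orth_sym addsmx_sub -!(orth_sym _ (_ :&: _)%MS) capmxSl capmxSr.
Qed.
Lemma orth_cap n p q (U : 'M[C]_(p, n)) (V : 'M[C]_(q, n)) :
  (orth (U :&: V)%MS :=: orth U + orth V)%MS.
Proof.
have eUV : (orth (orth U + orth V)%MS :=: U :&: V)%MS.
  exact: eqmx_trans (orth_adds _ _) (cap_eqmx (orthK U) (orthK V)).
exact: eqmx_trans (orth_eqmx (eqmx_sym eUV)) (orthK _).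
Qed.

(* In the DID construction this says R_{i+1} = (S_i + T_i)^perp. *)
Lemma orth_adds_orth_cap n p q (S : 'M[C]_(p, n)) (R : 'M[C]_(q, n)) :
  (R <= orth S)%MS -> (orth (S + (orth S :&: orth R))%MS :=: R)%MS.
Proof.
move=> sRS.
apply: eqmx_trans (orth_adds _ _) _.
apply: eqmx_trans (cap_eqmx (eqmx_refl _) (orth_cap _ _)) _.
apply: eqmx_trans (cap_eqmx (eqmx_refl _) (adds_eqmx (orthK S) (orthK R))) _.
apply: eqmx_trans (eqmx_sym (matrix_modr _ sRS)) _.
have -> : (orth S :&: S = 0)%MS by rewrite orthE capmxC orthomx_ortho_disj.
exact: adds0mx.
Qed.

End Adjoint.

Section PositiveOperators.
Variables (C : numClosedFieldType) (n : nat).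
Implicit Types (X Y Z : 'M[C]_n) (v w : 'cV[C]_n).

Definition qform Y v : C := (adj v *m Y *m v) 0 0.
Definition sqnorm v : C := (adj v *m v) 0 0.

Lemma sqnormE v : sqnorm v = \sum_i `|v i 0| ^+ 2.
Proof. by rewrite /sqnorm mxE; apply: eq_bigr => i _; rewrite !mxE normCKC. Qed.
Lemma sqnorm_ge0 v : 0 <= sqnorm v.
Proof. by rewrite sqnormE sumr_ge0 // => i _; rewrite exprn_ge0. Qed.
Lemma sqnorm_eq0 v : sqnorm v = 0 -> v = 0.
Proof.
rewrite sqnormE => /psumr_eq0P v0; apply/matrixP => i j; rewrite ord1 mxE.
have /eqP : `|v i 0| ^+ 2 = 0 by apply: v0 => // k _; rewrite exprn_ge0.
by rewrite expf_eq0 normr_eq0 => /eqP.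
Qed.
Lemma sqnorm_gt0 v : v != 0 -> 0 < sqnorm v.
Proof.
by move=> nz_v; rewrite lt_def sqnorm_ge0 andbT; apply: contra nz_v => /eqP/sqnorm_eq0->.
Qed.

Lemma qform1 v : qform 1%:M v = sqnorm v.
Proof. by rewrite /qform mulmx1. Qed.
Lemma qform0 v : qform 0 v = 0.
Proof. by rewrite /qform mulmx0 mul0mx mxE. Qed.
Lemma qform_at0 Y : qform Y 0 = 0.
Proof. by rewrite /qform mulmx0 mxE. Qed.
Lemma qformD Y Z v : qform (Y + Z) v = qform Y v + qform Z v.
Proof. by rewrite /qform mulmxDr mulmxDl mxE. Qed.
Lemma qformB Y Z v : qform (Y - Z) v = qform Y v - qform Z v.
Proof. by rewrite /qform mulmxBr mulmxBl !mxE. Qed.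
Lemma qformZ a Y v : qform (a *: Y) v = a * qform Y v.
Proof. by rewrite /qform -scalemxAr -scalemxAl mxE. Qed.
Lemma qform_sum I (r : seq I) (p : pred I) (F : I -> 'M[C]_n) v :
  qform (\sum_(i <- r | p i) F i) v = \sum_(i <- r | p i) qform (F i) v.
Proof. by elim/big_rec2: _ => [|i x y _ <-]; rewrite ?qform0 ?qformD. Qed.
Lemma qform_conj (A : 'M[C]_n) Y v : qform (adj A *m Y *m A) v = qform Y (A *m v).
Proof. by rewrite /qform adjM !mulmxA. Qed.
Lemma qform_proj (A : 'M[C]_n) v : adj A = A -> A *m A = A -> qform A v = sqnorm (A *m v).
Proof. by move=> hA idA; rewrite -qform1 -qform_conj hA mulmx1 idA. Qed.

Lemma psd_qform Y v : psd Y -> 0 <= qform Y v.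
Proof. by case=> _; apply. Qed.
Lemma psd_conj (A : 'M[C]_n) Y : psd Y -> psd (adj A *m Y *m A).
Proof.
move=> [hY pY]; split; first by rewrite !adjM adjK hY mulmxA.
by move=> v; rewrite -/(qform _ _) qform_conj; apply: pY.
Qed.
Lemma psd0 : psd (0 : 'M[C]_n).
Proof. by split; [rewrite adj0 | move=> v; rewrite -/(qform _ _) qform0]. Qed.
Lemma psd1 : psd (1%:M : 'M[C]_n).
Proof. by split; [rewrite adj1 | move=> v; rewrite -/(qform _ _) qform1 sqnorm_ge0]. Qed.
Lemma psdD Y Z : psd Y -> psd Z -> psd (Y + Z).
Proof.
move=> [hY pY] [hZ pZ]; split; first by rewrite adjD hY hZ.
by move=> v; rewrite -/(qform _ _) qformD addr_ge0 ?pY ?pZ.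
Qed.
Lemma psdZ a Y : 0 <= a -> psd Y -> psd (a *: Y).
Proof.
move=> a0 [hY pY]; split; first by rewrite adjZ hY geC0_conj.
by move=> v; rewrite -/(qform _ _) qformZ mulr_ge0 ?pY.
Qed.
Lemma psd_sum I (r : seq I) (p : pred I) (F : I -> 'M[C]_n) :
  (forall i, p i -> psd (F i)) -> psd (\sum_(i <- r | p i) F i).
Proof. by move=> pF; apply: (big_ind (@psd C n)) => //; [apply: psd0 | apply: psdD]. Qed.
Lemma psd_proj (A : 'M[C]_n) : adj A = A -> A *m A = A -> psd A.
Proof. by move=> hA idA; have := psd_conj A psd1; rewrite hA mulmx1 idA. Qed.
Lemma psd_rank1 w : psd (w *m adj w).
Proof.
split; first by rewrite adjM adjK.
move=> x; rewrite -/(qform _ _) /qform !mulmxA -(mulmxA (adj x *m w)).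
have -> : adj x *m w = adj (adj w *m x) by rewrite adjM adjK.
by rewrite mxE big_ord1 adj_entry mulrC mul_conjC_ge0.
Qed.

Definition sqfrob p q (A : 'M[C]_(p, q)) : C := \tr (A *m adj A).

Lemma sqfrobE p q (A : 'M[C]_(p, q)) : sqfrob A = \sum_i \sum_j `|A i j| ^+ 2.
Proof.
rewrite /sqfrob /mxtrace; apply: eq_bigr => i _; rewrite mxE.
by apply: eq_bigr => j _; rewrite !mxE normCK.
Qed.
Lemma sqfrob_ge0 p q (A : 'M[C]_(p, q)) : 0 <= sqfrob A.
Proof. by rewrite sqfrobE; do 2 (apply: sumr_ge0 => ? _); rewrite exprn_ge0. Qed.
Lemma sqfrob_entry p q (A : 'M[C]_(p, q)) i j : `|A i j| ^+ 2 <= sqfrob A.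
Proof.
rewrite sqfrobE (bigD1 i) //= (bigD1 j) //= -addrA lerDl.
by rewrite addr_ge0 // sumr_ge0 // => k _; rewrite ?sumr_ge0 // => *; rewrite exprn_ge0.
Qed.
Lemma sqfrob_eq0 p q (A : 'M[C]_(p, q)) : sqfrob A = 0 -> A = 0.
Proof.
move=> A0; apply/matrixP => i j; rewrite mxE.
have /eqP : `|A i j| ^+ 2 = 0.
  by apply/eqP; rewrite eq_le -{1}A0 sqfrob_entry exprn_ge0.
by rewrite expf_eq0 normr_eq0 => /eqP.
Qed.
Lemma sqfrob_entry_le p q (A : 'M[C]_(p, q)) (a : C) :
  0 <= a -> sqfrob A <= a ^+ 2 -> forall i j, `|A i j| <= a.
Proof.
move=> a0 hA i j.
by rewrite -(ler_pXn2r (n := 2)) ?nnegrE // (le_trans (sqfrob_entry _ _ _)).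
Qed.

Lemma adj_mulmx_entry_le (U V : 'M[C]_n) (a b : C) i j : 0 <= a ->
  (forall l, `|U l i| <= a) -> (forall l, `|V l j| <= b) ->
  `|(adj U *m V) i j| <= a * b *+ n.
Proof.
move=> a0 Ua Vb; rewrite mxE; apply: le_trans (ler_norm_sum _ _ _) _.
rewrite -[n in X in _ <= X]card_ord -sumr_const; apply: ler_sum => l _.
by rewrite adj_entry normrM norm_conjC ler_pM.
Qed.

Lemma supp_hermitian X : adj X = X -> (supp X :=: X^T)%MS.
Proof.
move=> hX; rewrite /supp; suff -> : kerop X = orth (X^T) by apply: orthK.
by rewrite /kerop /orth adjT hX.
Qed.

Lemma density_pure w : w != 0 -> density ((sqnorm w)^-1 *: (w *m adj w)).
Proof.
move=> nz_w; have w_gt0 := sqnorm_gt0 nz_w; split.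
  by apply: psdZ; [rewrite invr_ge0 ltW | apply: psd_rank1].
by rewrite mxtraceZ mxtrace_mulC trace_mx11 mulVf // gt_eqF.
Qed.

End PositiveOperators.

Section Spectral.
Variables (C : numClosedFieldType) (n : nat).

Lemma hermitian_spectral (X : 'M[C]_n) : adj X = X ->
  exists U (d : 'rV[C]_n),
    [/\ adj U *m U = 1%:M, U *m adj U = 1%:M & X = adj U *m diag_mx d *m U].
Proof.
move=> hX; have nX : X \is normalmx by apply/normalmxP; rewrite -/(adj X) hX.
have uU := spectral_unitarymx X.
have := orthomx_spectralP nX; rewrite invmx_unitary // => eX.
exists (spectralmx X), (spectral_diag X); split => //; last exact/eqP.
by have := mulVmx (unitarymx_unit uU); rewrite invmx_unitary.
Qed.

Lemma qform_delta (A : 'M[C]_n) i : qform A (delta_mx i 0) = A i i.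
Proof.
rewrite /qform mxE (bigD1 i) //= big1 => [|j nji]; last by rewrite !mxE (negbTE nji) mulr0.
rewrite addr0 !mxE eqxx mulr1 (bigD1 i) //= big1 => [|j nji]; last first.
  by rewrite !mxE (negbTE nji) /= rmorph0 mul0r.
by rewrite adj_entry !mxE eqxx /= rmorph1 mul1r addr0.
Qed.
Lemma qform_diag (d : 'rV[C]_n) w : qform (diag_mx d) w = \sum_i d 0 i * `|w i 0| ^+ 2.
Proof.
rewrite /qform mxE; apply: eq_bigr => i _; rewrite mxE (bigD1 i) //= big1 => [|j nji]; last first.
  by rewrite !mxE (negbTE nji) mulr0n mulr0.
by rewrite adj_entry !mxE eqxx mulr1n addr0 normCKC [RHS]mulrA [d 0 i * _]mulrC.
Qed.
Lemma mxtrace_diagM (d : 'rV[C]_n) (Y : 'M[C]_n) : \tr (diag_mx d *m Y) = \sum_i d 0 i * Y i i.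
Proof.
rewrite /mxtrace; apply: eq_bigr => i _; rewrite mxE (bigD1 i) //= big1 => [|j nji]; last first.
  by rewrite !mxE eq_sym (negbTE nji) mulr0n mul0r.
by rewrite !mxE eqxx mulr1n addr0.
Qed.
Lemma psd_diag_ge0 (A : 'M[C]_n) i : psd A -> 0 <= A i i.
Proof. by rewrite -qform_delta; apply: psd_qform. Qed.

Lemma psd_spectral (X : 'M[C]_n) : psd X ->
  exists U (d : 'rV[C]_n), [/\ adj U *m U = 1%:M, U *m adj U = 1%:M,
    X = adj U *m diag_mx d *m U & forall i, 0 <= d 0 i].
Proof.
move=> pX; have [U [d [UU UU' eX]]] := hermitian_spectral (proj1 pX).
exists U, d; split => // i.
have := psd_diag_ge0 i (psd_conj (adj U) pX).
by rewrite adjK eX !mulmxA UU' mul1mx -mulmxA UU' mulmx1 mxE eqxx mulr1n.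
Qed.

Lemma psd_mxtraceM_ge0 (X B : 'M[C]_n) : psd X -> psd B -> 0 <= \tr (X *m B).
Proof.
move=> pX pB; have [U [d [_ _ -> d_ge0]]] := psd_spectral pX.
rewrite -!mulmxA mxtrace_mulC -mulmxA mxtrace_diagM.
apply: sumr_ge0 => i _; rewrite mulr_ge0 //.
by have := psd_diag_ge0 i (psd_conj (adj U) pB); rewrite adjK.
Qed.

Lemma psd_factor (X : 'M[C]_n) : psd X -> exists B : 'M[C]_n, X = adj B *m B.
Proof.
move=> pX; have [U [d [_ _ -> d_ge0]]] := psd_spectral pX.
exists (diag_mx (map_mx sqrtC d) *m U).
rewrite adjM !mulmxA; congr (_ *m _); rewrite -mulmxA; congr (_ *m _).
apply/matrixP => i j; rewrite [RHS]mxE (bigD1 i) //= big1 => [|k nki]; last first.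
  by rewrite adj_entry !mxE (negbTE nki) mulr0n rmorph0 mul0r.
rewrite adj_entry !mxE addr0 eqxx mulr1n; case: (_ == _); last by rewrite !mulr0n mulr0.
by rewrite !mulr1n geC0_conj ?sqrtC_ge0 // -expr2 sqrtCK.
Qed.

(* delta := 1 / (1 + sum of the inverse eigenvalues) is below every eigenvalue. *)
Lemma posdef_qform_lower_bound (A : 'M[C]_n) :
  adj A = A -> (forall v, v != 0 -> 0 < qform A v) ->
  exists2 delta : C, 0 < delta <= 1 & forall v, delta * sqnorm v <= qform A v.
Proof.
move=> hA pA; have [U [d [UU UU' eA]]] := hermitian_spectral hA.
have d_gt0 i : 0 < d 0 i.
  have := pA (adj U *m delta_mx i 0).
  rewrite -qform_conj adjK eA !mulmxA UU' mul1mx -mulmxA UU' mulmx1 qform_delta.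
  rewrite mxE eqxx mulr1n; apply; apply/eqP => /(congr1 (mulmx U)).
  rewrite mulmxA UU' mul1mx mulmx0 => /matrixP/(_ i 0).
  by rewrite !mxE !eqxx => /eqP; rewrite oner_eq0.
set s := \sum_i (d 0 i)^-1.
have s_ge0 : 0 <= s by apply: sumr_ge0 => i _; rewrite invr_ge0 ltW.
have s1_gt0 : 0 < 1 + s by rewrite ltr_wpDr.
exists (1 + s)^-1; first by rewrite invr_gt0 s1_gt0 invf_le1 // lerDl.
move=> v; rewrite eA qform_conj qform_diag.
have -> : sqnorm v = sqnorm (U *m v).
  by rewrite /sqnorm adjM !mulmxA -(mulmxA (adj v)) UU mulmx1.
rewrite sqnormE mulr_sumr; apply: ler_sum => i _; apply: ler_wpM2r; first exact: exprn_ge0.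
rewrite -[d 0 i]invrK lef_pV2 ?posrE ?invr_gt0 //.
rewrite /s (bigD1 i) //= addrCA lerDl addr_ge0 // sumr_ge0 // => j _.
by rewrite invr_ge0 ltW.
Qed.

End Spectral.

Section KrausMaps.
Variables (C : numClosedFieldType) (n m : nat) (M : 'I_m -> 'M[C]_n).

Definition kraus_dual (Y : 'M[C]_n) : 'M[C]_n := \sum_k adj (M k) *m Y *m M k.

Lemma kraus_dualB Y Z : kraus_dual (Y - Z) = kraus_dual Y - kraus_dual Z.
Proof. by rewrite /kraus_dual -sumrB; apply: eq_bigr => k _; rewrite mulmxBr mulmxBl. Qed.
Lemma iter_kraus_dualB t Y Z :
  iter t kraus_dual (Y - Z) = iter t kraus_dual Y - iter t kraus_dual Z.
Proof. by elim: t => //= t ->; rewrite kraus_dualB. Qed.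
Lemma qform_kraus_dual Y v : qform (kraus_dual Y) v = \sum_k qform Y (M k *m v).
Proof. by rewrite /kraus_dual qform_sum; apply: eq_bigr => k _; rewrite qform_conj. Qed.

Lemma psd_kraus_dual Y : psd Y -> psd (kraus_dual Y).
Proof. by move=> pY; apply: psd_sum => k _; apply: psd_conj. Qed.
Lemma psd_iter_kraus_dual t Y : psd Y -> psd (iter t kraus_dual Y).
Proof. by elim: t => //= t IH pY; apply/psd_kraus_dual/IH. Qed.
Lemma psd_kraus X : psd X -> psd (kraus M X).
Proof. by move=> pX; apply: psd_sum => k _; have := psd_conj (adj (M k)) pX; rewrite adjK. Qed.
Lemma psd_iter_kraus t X : psd X -> psd (iter t (kraus M) X).
Proof. by elim: t => //= t IH pX; apply/psd_kraus/IH. Qed.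

Lemma mxtrace_krausM X B : \tr (kraus M X *m B) = \tr (X *m kraus_dual B).
Proof.
rewrite /kraus /kraus_dual mulmx_suml mulmx_sumr !raddf_sum /=; apply: eq_bigr => k _.
by rewrite -!mulmxA mxtrace_mulC !mulmxA.
Qed.
Lemma mxtrace_iter_krausM t X B :
  \tr (iter t (kraus M) X *m B) = \tr (X *m iter t kraus_dual B).
Proof. by elim: t B => //= t IH B; rewrite mxtrace_krausM IH -iterSr. Qed.

Hypothesis tpM : trace_preserving M.

Lemma kraus_dual1 : kraus_dual 1%:M = 1%:M.
Proof. by rewrite /kraus_dual -[RHS]tpM; apply: eq_bigr => k _; rewrite mulmx1. Qed.
Lemma sqnorm_kraus v : sqnorm v = \sum_k sqnorm (M k *m v).
Proof.
rewrite -qform1 -kraus_dual1 qform_kraus_dual.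
by apply: eq_bigr => k _; rewrite qform1.
Qed.
Lemma mxtrace_iter_kraus t X : \tr (iter t (kraus M) X) = \tr X.
Proof.
have := mxtrace_iter_krausM t X 1%:M; rewrite !mulmx1 => ->.
suff -> : iter t kraus_dual 1%:M = 1%:M by rewrite mulmx1.
by elim: t => //= t ->; rewrite kraus_dual1.
Qed.

End KrausMaps.

Section DIDConstruction.
Variables (C : numClosedFieldType) (n m : nat) (M : 'I_m -> 'M[C]_n).
Implicit Types S : 'M[C]_n.

Local Notation continues_until S0 i :=
  (forall j, (j < i)%N -> DID_cont M (DID_S M S0 j)).

Lemma sub_DID_Rnext S (v : 'cV[C]_n) : (v^T <= orth S)%MS ->
  (forall k, ((M k *m v)^T <= orth S)%MS) -> (v^T <= DID_Rnext M S)%MS.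
Proof.
move=> vS MvS; rewrite /DID_Rnext /DID_R sub_capmx vS /=.
apply/sub_bigcapmxP => k _; apply/sub_kermxP.
by rewrite mulmxA -trmx_mul; apply/eqP; rewrite -sub_orth.
Qed.

Lemma orth_DID_S (S0 : 'M[C]_n) t : (orth (DID_S M S0 t.+1) :=: DID_Rnext M (DID_S M S0 t))%MS.
Proof. by rewrite /DID_S iterS; apply: orth_adds_orth_cap; apply: capmxSl. Qed.

Lemma DID_S_mono (S0 : 'M[C]_n) i : (S0 <= DID_S M S0 i)%MS.
Proof.
elim: i => [|i IH]; first exact: submx_refl.
by rewrite /DID_S iterS (submx_trans IH) // addsmxSl.
Qed.

Lemma rank_orth_DID_S (S0 : 'M[C]_n) i : continues_until S0 i ->
  (\rank (orth (DID_S M S0 i)) + i <= \rank (orth S0))%N.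
Proof.
elim: i => [|i IH] cont_i; first by rewrite addn0.
have /andP[not_fail _] := cont_i i (ltnSn i).
have lt_rank : (\rank (DID_Rnext M (DID_S M S0 i)) < \rank (orth (DID_S M S0 i)))%N.
  by rewrite (ltn_leqif (mxrank_leqif_eq (capmxSl _ _))).
apply: leq_trans (IH _); last by move=> j lt_ji; apply/cont_i/ltnW.
by rewrite (orth_DID_S _ i) addnS ltn_add2r.
Qed.

Lemma rank_orth_DID_S_neq0 (S0 : 'M[C]_n) i :
  (\rank (orth S0) != 0)%N -> continues_until S0 i ->
  (\rank (orth (DID_S M S0 i)) != 0)%N.
Proof.
case: i => [//|i] _ cont_i.
by rewrite (orth_DID_S _ i); have /andP[_ ->] := cont_i i (ltnSn i).
Qed.

Lemma DID_terminates (S0 : 'M[C]_n) : exists i, continues_until S0 i /\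
  (DID_fail M (DID_S M S0 i) || DID_succ M (DID_S M S0 i)).
Proof.
have ex_stop : exists i, ~~ DID_cont M (DID_S M S0 i).
  case: (boolP [forall j : 'I_n.+1, DID_cont M (DID_S M S0 j)]) => [/forallP cont_n|].
    have := rank_orth_DID_S (i := n.+1) (fun j lt_jn => cont_n (Ordinal lt_jn)).
    by rewrite addnS ltnNge (leq_trans (rank_leq_col _)) ?leq_addl.
  by case/forallPn => j; exists j.
case: (ex_minnP ex_stop) => i stop_i min_i.
exists i; split; last first.
  by move: stop_i; rewrite /DID_succ /DID_cont; case: (DID_fail _ _) => //= /negPn.
by move=> j lt_ji; apply/negPn/negP => /min_i; rewrite leqNgt lt_ji.
Qed.

(* A failed step leaves R = S^perp invariant under every M_k, i.e. S under every M_k^*. *)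
Lemma DID_fail_stable S k : DID_fail M S -> (S *m (adj (M k))^T <= S)%MS.
Proof.
rewrite /DID_fail /DID_Rnext /DID_R => /andP[_ sub_Rnext].
have : (orth S <= kermx ((M k)^T *m adj S))%MS.
  apply: (submx_trans sub_Rnext); apply: (submx_trans (capmxSr _ _)).
  exact: bigcapmx_inf.
move/sub_kermxP; rewrite mulmxA => RMS0.
suff : (S *m (adj (M k))^T <= orth (orth S))%MS by rewrite orthK.
rewrite orth_sym sub_orth adjM adjT adjK mulmxA.
by rewrite RMS0.
Qed.

Lemma kraus_mulmx_tr_eq0 S X : DID_fail M S ->
  X *m S^T = 0 -> kraus M X *m S^T = 0.
Proof.
move=> fail_S XS0; rewrite /kraus mulmx_suml big1 // => k _.
have /submxP[D eD] := DID_fail_stable k fail_S.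
have eMS : adj (M k) *m S^T = S^T *m D^T by rewrite -trmx_mul -eD trmx_mul trmxK.
by rewrite -mulmxA eMS mulmxA -(mulmxA (M k)) XS0 mulmx0 mul0mx.
Qed.

Lemma rank1_mulmx_tr_eq0 S (w : 'cV[C]_n) : (w^T <= orth S)%MS -> w *m adj w *m S^T = 0.
Proof.
rewrite sub_orth => /eqP wS0; rewrite -mulmxA.
have -> : adj w *m S^T = map_mx Num.conj (w^T *m adj S).
  apply/matrixP => i j; rewrite !mxE rmorph_sum; apply: eq_bigr => l _.
  by rewrite !mxE rmorphM /= conjCK.
by rewrite wS0 map_mx0 mulmx0.
Qed.

End DIDConstruction.

Section OrthogonalProjection.
Variables (C : numClosedFieldType) (n : nat) (P : 'M[C]_n).
Hypothesis projP : orth_proj P.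

Definition compl_proj : 'M[C]_n := 1%:M - P.
Local Notation Q := compl_proj.

Lemma adjP : adj P = P. Proof. by case: projP. Qed.
Lemma mulPP : P *m P = P. Proof. by case: projP. Qed.
Lemma adjQ : adj Q = Q. Proof. by rewrite adjB adj1 adjP. Qed.
Lemma mulPQ : P *m Q = 0. Proof. by rewrite mulmxBr mulPP mulmx1 subrr. Qed.
Lemma mulQP : Q *m P = 0. Proof. by rewrite mulmxBl mulPP mul1mx subrr. Qed.
Lemma mulQQ : Q *m Q = Q. Proof. by rewrite {1}/compl_proj mulmxBl mul1mx mulPQ subr0. Qed.
Lemma addPQ : P + Q = 1%:M. Proof. by rewrite addrC subrK. Qed.
Lemma psdP : psd P. Proof. exact: psd_proj adjP mulPP. Qed.
Lemma psdQ : psd Q. Proof. exact: psd_proj adjQ mulQQ. Qed.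
Lemma qformP v : qform P v = sqnorm (P *m v). Proof. exact: qform_proj adjP mulPP. Qed.
Lemma qformQ v : qform Q v = sqnorm (Q *m v). Proof. exact: qform_proj adjQ mulQQ. Qed.

Lemma sqnorm_split v : sqnorm v = sqnorm (P *m v) + sqnorm (Q *m v).
Proof. by rewrite -qform1 -addPQ qformD qformP qformQ. Qed.

Lemma sqfrob_split (B : 'M[C]_n) : sqfrob B = sqfrob (B *m P) + sqfrob (B *m Q).
Proof.
rewrite /sqfrob -mxtraceD !adjM adjP adjQ !mulmxA -(mulmxA B P) mulPP -(mulmxA B Q) mulQQ.
by rewrite -mulmxDl -mulmxDr addPQ mulmx1.
Qed.
Lemma sqfrob_mulQ (B : 'M[C]_n) : sqfrob (B *m Q) = \tr (Q *m (adj B *m B)).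
Proof. by rewrite /sqfrob adjM adjQ -mulmxA (mulmxA Q) mulQQ mxtrace_mulC !mulmxA. Qed.

Lemma mxtrace_split X : \tr X = \tr (P *m X) + \tr (Q *m X).
Proof. by rewrite -mxtraceD -mulmxDl addPQ mul1mx. Qed.

(* Writing X = B^* B, the off-diagonal blocks of X are products of B and B Q,
   and tr (Q X) is the squared Frobenius norm of B Q. *)
Lemma density_offdiag_entry_le (X : 'M[C]_n) (eta : C) :
  density X -> 0 <= eta -> \tr (Q *m X) <= eta ^+ 2 ->
  forall i j, `|(X - P *m X *m P) i j| <= eta *+ (2 * n).
Proof.
move=> [pX trX] eta_ge0 QX_le i j; have [B eB] := psd_factor pX.
have frobB : sqfrob B = 1 by rewrite /sqfrob mxtrace_mulC -eB.
have BQ_le : forall l i, `|(B *m Q) l i| <= eta.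
  by apply: sqfrob_entry_le => //; rewrite sqfrob_mulQ -eB.
have B_le : forall l i, `|B l i| <= 1.
  by apply: sqfrob_entry_le => //; rewrite frobB expr1n.
have BP_le : forall l i, `|(B *m P) l i| <= 1.
  apply: sqfrob_entry_le => //.
  by rewrite expr1n -frobB [in X in _ <= X]sqfrob_split lerDl sqfrob_ge0.
have -> : X - P *m X *m P = adj (B *m Q) *m B + adj (B *m P) *m (B *m Q).
  have -> : X - P *m X *m P = Q *m X + P *m X *m Q.
    by rewrite (mulmxBl 1%:M P X) mul1mx (mulmxBr (P *m X) 1%:M P) mulmx1 addrA subrK.
  by rewrite !adjM adjQ adjP eB !mulmxA.
rewrite mxE; apply: le_trans (ler_normD _ _) _.
have -> : eta *+ (2 * n) = eta * 1 *+ n + 1 * eta *+ n.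
  by rewrite mulr1 mul1r -mulrnDr addnn mul2n.
by apply: lerD; apply: adj_mulmx_entry_le.
Qed.

Lemma rank_orth_rangeop_neq0 : P != 1%:M -> (\rank (orth (rangeop P)) != 0)%N.
Proof.
apply: contra; rewrite rank_orth subn_eq0 /rangeop mxrank_tr => rankP.
have : row_full P by rewrite /row_full eqn_leq rank_leq_col rankP.
rewrite row_full_unit => uP; apply/eqP.
by have := mulKmx uP P; rewrite mulPP mulVmx.
Qed.


Section InvariantSubspace.
Variables (m : nat) (M : 'I_m -> 'M[C]_n).
Hypotheses (tpM : trace_preserving M) (invP : invariant_subspace M P).

Local Notation T := (kraus M).
Local Notation Tdual := (kraus_dual M).
Local Notation S_ i := (DID_S M (rangeop P) i).

(* Invariance applied to the state P itself: tr (Q T(P) Q) = sum_k ||Q M_k P||^2 vanishes. *)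
Lemma mulQMP k : Q *m M k *m P = 0.
Proof.
have psdTP := psd_kraus M psdP.
have : (supp (T P) <= rangeop P)%MS.
  by apply: invP psdP _; rewrite supp_hermitian ?adjP.
rewrite supp_hermitian; last by case: psdTP.
case/submxP => D eD; have QTP0 : Q *m T P = 0.
  by rewrite -[T P]trmxK eD trmx_mul trmxK mulmxA mulQP mul0mx.
have : \sum_k sqfrob (Q *m M k *m P) = \tr (Q *m T P *m Q).
  rewrite /kraus mulmx_sumr mulmx_suml raddf_sum /=; apply: eq_bigr => j _.
  by rewrite /sqfrob !adjM adjP adjQ !mulmxA -(mulmxA _ P P) mulPP.
rewrite QTP0 mul0mx mxtrace0 => /psumr_eq0P.
by move=> /(_ (fun j _ => sqfrob_ge0 _) k isT)/sqfrob_eq0.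
Qed.

Lemma mulQM k : Q *m M k = Q *m M k *m Q.
Proof. by rewrite -{1}[M k]mulmx1 -addPQ !mulmxDr !mulmxA mulQMP add0r. Qed.

Lemma kraus_dual_QQ Y : Tdual (Q *m Y *m Q) = Q *m Tdual (Q *m Y *m Q) *m Q.
Proof.
rewrite /kraus_dual mulmx_sumr mulmx_suml; apply: eq_bigr => k _.
have adjMQ : adj (M k) *m Q = Q *m adj (M k) *m Q.
  by rewrite -adjQ -adjM mulQM !adjM mulmxA.
by rewrite !mulmxA adjMQ -!mulmxA mulQM !mulmxA.
Qed.

Lemma qform_QQ Y w : qform (Q *m Y *m Q) w = qform Y (Q *m w).
Proof. by rewrite -qform_conj adjQ. Qed.

(* tr (gap t X) = tr (Q X) - tr (Q T^t(X)) is the weight that X moves into H_S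
   within t steps. *)
Definition gap t : 'M[C]_n := Q - iter t Tdual Q.

Lemma gap_QQ t : Q *m gap t *m Q = gap t.
Proof.
have iterQQ : Q *m iter t Tdual Q *m Q = iter t Tdual Q.
  elim: t => [|t IH] /=; first by rewrite !mulQQ.
  by have := kraus_dual_QQ (iter t Tdual Q); rewrite IH => <-.
by rewrite /gap (mulmxBr Q Q) (mulmxBl (Q *m Q)) !mulQQ iterQQ.
Qed.

Lemma gapS t : gap t.+1 = gap 1 + Tdual (gap t).
Proof. by rewrite /gap /= (kraus_dualB M Q) addrA subrK. Qed.

Lemma qform_gap1 u : Q *m u = u -> qform (gap 1) u = \sum_k sqnorm (P *m (M k *m u)).
Proof.
move=> Qu; rewrite qformB qformQ // Qu qform_kraus_dual (sqnorm_kraus tpM) -sumrB.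
by apply: eq_bigr => k _; rewrite qformQ // sqnorm_split addrK.
Qed.

Lemma psd_gap1 : psd (gap 1).
Proof.
split; first by rewrite adjB adjQ; case: (psd_kraus_dual M psdQ) => ->.
move=> w; rewrite -/(qform _ _) -gap_QQ qform_QQ qform_gap1 ?mulmxA ?mulQQ //.
by apply: sumr_ge0 => k _; apply: sqnorm_ge0.
Qed.

Lemma psd_gap t : psd (gap t).
Proof.
elim: t => [|t IH]; first by rewrite /gap subrr; apply: psd0.
by rewrite gapS; apply: psdD; [exact: psd_gap1 | exact: psd_kraus_dual].
Qed.

Lemma qform_gap_le t v : qform (gap t) v <= qform (gap t.+1) v.
Proof.
rewrite -subr_ge0 -qformB; apply: psd_qform.
have -> : gap t.+1 - gap t = iter t Tdual (gap 1).
  by rewrite /gap (iter_kraus_dualB M t Q) -iterSr opprB addrC addrA subrK.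
exact: psd_iter_kraus_dual psd_gap1.
Qed.

Lemma qform_gapS_eq0 t u : Q *m u = u -> qform (gap t.+1) u = 0 ->
  forall k, Q *m (M k *m u) = M k *m u /\ qform (gap t) (M k *m u) = 0.
Proof.
move=> Qu; rewrite gapS qformD qform_kraus_dual => /eqP.
have gap_ge0 s w : 0 <= qform (gap s) w by apply/psd_qform/psd_gap.
rewrite paddr_eq0 ?gap_ge0 ?sumr_ge0 // => /andP[/eqP gap1_0 /eqP gapt_0] k.
split; last by apply: (psumr_eq0P _ gapt_0) => // j _; apply: gap_ge0.
have /sqnorm_eq0 PMu0 : sqnorm (P *m (M k *m u)) = 0.
  by move: gap1_0; rewrite qform_gap1 // => /psumr_eq0P; apply=> // j _; apply: sqnorm_ge0.
by rewrite mulmxBl mul1mx PMu0 subr0.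
Qed.

(* A vector of H_S^perp that the gap does not see stays in H_S^perp under
   every product of t Kraus operators, hence lies in R_{t+1}. *)
Lemma qform_gap_eq0_sub_orth t u : Q *m u = u -> qform (gap t) u = 0 ->
  (u^T <= orth (S_ t))%MS.
Proof.
elim: t u => [|t IH] u Qu gap_u0.
  by rewrite sub_orth /rangeop adjT adjP -trmx_mul -Qu mulmxA mulPQ // mul0mx trmx0.
have gap_t0 : qform (gap t) u = 0.
  by apply/eqP; rewrite eq_le -{1}gap_u0 qform_gap_le; apply/psd_qform/psd_gap.
rewrite (orth_DID_S _ _ t); apply: sub_DID_Rnext; first exact: IH.
by move=> k; have [QMu gapMu] := qform_gapS_eq0 Qu gap_u0 k; apply: IH.
Qed.

Lemma GAS_reaches_subspace rho : GAS M P -> density rho ->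
  ~ (forall t, iter t T rho *m P = 0).
Proof.
move=> gas rho_dens XP0.
have eps_gt0 : 0 < n.+1%:R^-1 :> C by rewrite invr_gt0 ltr0n.
have [N lt_eps] := gas rho rho_dens _ eps_gt0.
have trX : \tr (iter N T rho) = 1 by rewrite mxtrace_iter_kraus //; case: rho_dens.
have : `|\tr (iter N T rho)| <= n.+1%:R^-1 *+ n.
  apply: le_trans (ler_norm_sum _ _ _) _.
  rewrite -[n in _ *+ n]card_ord -sumr_const.
  apply: ler_sum => i _.
  by have := lt_eps N (leqnn N) i i; rewrite -mulmxA XP0 mulmx0 subr0 => /ltW.
by rewrite trX normr1 -[_ *+ n]mulr_natl ler_pdivlMr ?ltr0n // mul1r ler_nat ltnn.
Qed.

(* On failure the remainder R_i is nonzero, invariant and orthogonal to H_S: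
   a pure state in R_i never reaches H_S. *)
Lemma DID_fail_not_GAS i : P != 1%:M ->
  (forall j, (j < i)%N -> DID_cont M (S_ j)) -> DID_fail M (S_ i) -> ~ GAS M P.
Proof.
move=> nP cont_i fail_i gas.
have := rank_orth_DID_S_neq0 (rank_orth_rangeop_neq0 nP) cont_i.
rewrite mxrank_eq0 => /rowV0Pn[v v_in nz_v].
have nz_w : v^T != 0 by rewrite trmx_eq0.
apply: (GAS_reaches_subspace gas (density_pure nz_w)) => t.
have XS0 : iter t T ((sqnorm v^T)^-1 *: (v^T *m adj v^T)) *m (S_ i)^T = 0.
  elim: t => [|t IH] /=; last exact: kraus_mulmx_tr_eq0 fail_i IH.
  by rewrite -scalemxAl rank1_mulmx_tr_eq0 ?trmxK ?scaler0.
have /submxP[D eD] := DID_S_mono M (rangeop P) i.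
by rewrite -[P]trmxK -[P^T]/(rangeop P) eD trmx_mul mulmxA XS0 mul0mx.
Qed.

Lemma gap_addP_posdef I : (\rank (DID_Rnext M (S_ I)) == 0)%N ->
  forall v, v != 0 -> 0 < qform (gap I.+1 + P) v.
Proof.
move=> R0 v nz_v; rewrite qformD -gap_QQ qform_QQ qformP.
have [Qv0|nz_Qv] := eqVneq (Q *m v) 0.
  rewrite Qv0 qform_at0 add0r sqnorm_gt0 //; apply: contra nz_v => /eqP Pv0.
  by rewrite -[v]mul1mx -addPQ mulmxDl Pv0 Qv0 addr0.
apply: ltr_wpDr; first exact: sqnorm_ge0.
rewrite lt_def psd_qform ?andbT; last exact: psd_gap.
apply: contra nz_Qv => /eqP gap0.
have QQv : Q *m (Q *m v) = Q *m v by rewrite mulmxA mulQQ.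
have := qform_gap_eq0_sub_orth QQv gap0.
by rewrite (orth_DID_S _ _ I); move: R0; rewrite mxrank_eq0 => /eqP->; rewrite submx0 trmx_eq0.
Qed.

(* Success at step I makes gap (I+1) positive definite on H_S^perp, so
   gap (I+1) >= delta Q and each block of I+1 steps removes a fraction delta
   of the weight tr (Q X) outside H_S. *)
Lemma DID_succ_contraction I : (\rank (DID_Rnext M (S_ I)) == 0)%N ->
  exists2 c : C, 0 <= c < 1 &
    forall X, psd X -> \tr (Q *m iter I.+1 T X) <= c * \tr (Q *m X).
Proof.
move=> R0; have adj_gap : adj (gap I.+1) = gap I.+1 by case: (psd_gap I.+1).
have adj_gapP : adj (gap I.+1 + P) = gap I.+1 + P by rewrite adjD adjP adj_gap.
have [delta /andP[delta_gt0 delta_le1] lower] :=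
  posdef_qform_lower_bound adj_gapP (gap_addP_posdef R0).
exists (1 - delta); first by rewrite subr_ge0 delta_le1 ltrBlDr ltrDl delta_gt0.
have psd_gap_delta : psd (gap I.+1 - delta *: Q).
  split; first by rewrite adjB adjZ adjQ geC0_conj ?ltW // adj_gap.
  move=> w; rewrite -/(qform _ _) qformB qformZ qformQ -gap_QQ qform_QQ subr_ge0.
  have := lower (Q *m w); rewrite qformD qformP mulmxA mulPQ mul0mx.
  by rewrite -(qform1 0) qform_at0 addr0.
move=> X pX; rewrite mxtrace_mulC mxtrace_iter_krausM.
have -> : iter I.+1 Tdual Q = Q - gap I.+1 by rewrite /gap opprB addrC subrK.
have := psd_mxtraceM_ge0 pX psd_gap_delta.
rewrite (mulmxBr X (gap I.+1)) raddfB /= -scalemxAr mxtraceZ subr_ge0 => lower_tr.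
rewrite (mulmxBr X Q) raddfB /= mxtrace_mulC mulrBl mul1r lerD2l lerN2.
by rewrite mxtrace_mulC.
Qed.

Lemma mxtrace_Q_kraus_le X : psd X -> \tr (Q *m T X) <= \tr (Q *m X).
Proof.
move=> pX; rewrite mxtrace_mulC mxtrace_krausM (mxtrace_mulC Q) -subr_ge0.
by rewrite -raddfB /= -mulmxBr; apply: psd_mxtraceM_ge0 pX psd_gap1.
Qed.

Lemma mxtrace_Q_iter_kraus_le X d t : psd X ->
  \tr (Q *m iter (d + t) T X) <= \tr (Q *m iter t T X).
Proof.
move=> pX; elim: d => // d IH; rewrite addSn /=.
exact: le_trans (mxtrace_Q_kraus_le (psd_iter_kraus M _ pX)) IH.
Qed.

Lemma DID_succ_decay I : (\rank (DID_Rnext M (S_ I)) == 0)%N ->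
  exists N, exists2 c : C, 0 <= c < 1 & forall rho, density rho ->
    forall k t, (k * N <= t)%N -> \tr (Q *m iter t T rho) <= c ^+ k.
Proof.
move=> R0; have [c /andP[c_ge0 c_lt1] contract] := DID_succ_contraction R0.
exists I.+1, c => [|rho [psd_rho tr_rho] k t le_kt]; first by rewrite c_ge0.
rewrite -(subnK le_kt); apply: le_trans (mxtrace_Q_iter_kraus_le _ _ psd_rho) _.
elim: k {le_kt} => [|k IH].
  rewrite mul0n expr0 -tr_rho (mxtrace_split rho) lerDr.
  exact: psd_mxtraceM_ge0 psdP psd_rho.
rewrite mulSn iterD exprS; apply: le_trans (contract _ (psd_iter_kraus M _ psd_rho)) _.
exact: ler_wpM2l.
Qed.

End InvariantSubspace.

End OrthogonalProjection.

Lemma expr_bernoulli_le1 (R : numDomainType) (c : R) k :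
  0 <= c <= 1 -> c ^+ k * (1 + k%:R * (1 - c)) <= 1.
Proof.
case/andP=> c_ge0 c_le1; elim: k => [|k IH]; first by rewrite mul0r addr0 expr0 mulr1.
have -> : c ^+ k.+1 * (1 + k.+1%:R * (1 - c)) =
    c ^+ k * (1 + k%:R * (1 - c)) - c ^+ k * (k.+1%:R * (1 - c) ^+ 2).
  by rewrite -natr1 exprS; ring.
apply: le_trans IH; rewrite gerBl mulr_ge0 ?exprn_ge0 // mulr_ge0 //.
by rewrite exprn_ge0 // subr_ge0.
Qed.

Lemma expr_eventually_le (R : archiNumFieldType) (c eta : R) :
  0 <= c < 1 -> 0 < eta -> exists k : nat, c ^+ k <= eta.
Proof.
case/andP=> c_ge0 c_lt1 eta_gt0; have d_gt0 : 0 < 1 - c by rewrite subr_gt0.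
have inv_ge0 : 0 <= ((1 - c) * eta)^-1 by rewrite invr_ge0 ltW // mulr_gt0.
have := archi_boundP inv_ge0; set k := Num.Def.archi_bound _ => k_gt; exists k.
move: k_gt; rewrite -[_^-1]mul1r ltr_pdivrMr ?mulr_gt0 // => k_gt.
have eta_bern : 1 <= eta * (1 + k%:R * (1 - c)).
  rewrite mulrDr mulr1 (le_trans (ltW k_gt)) //.
  have -> : eta * (k%:R * (1 - c)) = k%:R * ((1 - c) * eta) by ring.
  by rewrite lerDr ltW.
apply: le_trans (_ : c ^+ k * (eta * (1 + k%:R * (1 - c))) <= _).
  by rewrite -{1}[c ^+ k]mulr1 ler_wpM2l ?exprn_ge0.
rewrite mulrCA -{2}[eta]mulr1 ler_wpM2l ?(ltW eta_gt0) //.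
by apply: expr_bernoulli_le1; rewrite c_ge0 ltW.
Qed.

Section Convergence.
Variables (C : archiClosedFieldType) (n m : nat) (M : 'I_m -> 'M[C]_n) (P : 'M[C]_n).
Hypotheses (projP : orth_proj P) (tpM : trace_preserving M).

Lemma GAS_of_decay :
  (exists N, exists2 c : C, 0 <= c < 1 & forall rho, density rho ->
     forall k t, (k * N <= t)%N -> \tr (compl_proj P *m iter t (kraus M) rho) <= c ^+ k) ->
  GAS M P.
Proof.
move=> [N [c c01 decay]] rho rho_dens eps eps_gt0.
set eta := eps / (2 * n).+1%:R.
have eta_gt0 : 0 < eta by rewrite divr_gt0 // ltr0n.
have [k ck_le] := expr_eventually_le c01 (mulr_gt0 eta_gt0 eta_gt0).
exists (k * N)%N => t le_kNt i j.
have X_dens : density (iter t (kraus M) rho).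
  case: rho_dens => psd_rho tr_rho.
  by split; [apply: psd_iter_kraus | rewrite mxtrace_iter_kraus].
have QX_le : \tr (compl_proj P *m iter t (kraus M) rho) <= eta ^+ 2.
  by rewrite expr2 (le_trans (decay _ rho_dens _ _ le_kNt)).
apply: le_lt_trans (density_offdiag_entry_le projP X_dens (ltW eta_gt0) QX_le i j) _.
by rewrite -mulr_natr /eta mulrAC ltr_pdivrMr ?ltr0n // ltr_pM2l // ltr_nat.
Qed.

End Convergence.

Theorem proposition4 (C : archiClosedFieldType) (n m : nat)
  (M : 'I_m -> 'M[C]_n) (P : 'M[C]_n) :
  trace_preserving M ->
  orth_proj P ->
  P != 1%:M ->
  invariant_subspace M P ->
  GAS M P <-> DID_terminates_successfully M (rangeop P).
Proof.
move=> tpM projP nP invP; split => [gas | [I [_ /andP[_ R0]]]].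
  have [i [cont_i /orP[fail_i | succ_i]]] := DID_terminates M (rangeop P).
    by case: (DID_fail_not_GAS projP tpM nP cont_i fail_i gas).
  by exists i.
exact: GAS_of_decay projP tpM (DID_succ_decay projP tpM invP R0).
Qed.
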